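(* Let $\theta>1$, $r\in(\theta^{-1},\theta^{-1/2}]$ and $s=\max\big(1,\frac{\ln\theta}{\ln(r\theta)}-2\big)$. Let $(P_1,\dots,P_n)$ be a random price sequence with values in $[1,\theta]$, $P^*=\max_iP_i$, and let $Y$ be a random prediction with values in $[1,\theta]$, with arbitrary joint distribution. Then \[ \frac{\mathbb{E}[\mathsf{A}^1_r(P,Y)]}{\mathbb{E}[P^*]}\ \ge\ \max\Big\{r,\ \frac{1}{r\theta}\,\frac{\mathbb{E}[P^*\,\mathcal{E}(P^*,Y)^{s}]}{\mathbb{E}[P^*]}\Big\}. \]
   Context: One-max search: fix $\theta>1$. Prices $p_1,\dots,p_n\in[1,\theta]$ are revealed one at a time; the algorithm receives at the start a prediction $y\in[1,\theta]$ of the maximum price. At each step it irrevocably accepts the current price (payoff = that price) or rejects it; if nothing is accepted the payoff is $1$. Let $\varphi_r(z)=\frac{r\theta-1}{1-r}+\frac{1-r^2\theta}{1-r}\cdot\frac{z}{r\theta}$ and $\Phi^1_r(z)=\max(r\theta,\varphi_r(z))$; $\mathsf{A}^1_r$ accepts the first price $p_i\ge\Phi^1_r(y)$, and $\mathsf{A}^1_r(P,Y)$ denotes its (random) payoff run on the realized prices and prediction. $\mathcal{E}(a,b)=\min\{a/b,b/a\}$. *)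

From HB Require Import structures.
From mathcomp Require Import all_boot all_order all_algebra.
From mathcomp Require Import all_classical all_reals all_analysis.
Set Implicit Arguments. Unset Strict Implicit. Unset Printing Implicit Defensive.
Import Order.TTheory GRing.Theory Num.Theory.
Local Open Scope ring_scope.

Section OneMax.
Variable R : realType.

Definition phi_r (theta r z : R) : R :=
  (r * theta - 1) / (1 - r) + (1 - r ^+ 2 * theta) / (1 - r) * (z / (r * theta)).

Definition Phi1 (theta r z : R) : R := Num.max (r * theta) (phi_r theta r z).

Definition threshold_payoff (thr : R) (s : seq R) : R :=
  foldr (fun x acc => if thr <= x then x else acc) 1 s.

Definition A1 (theta r : R) (n : nat) (p : 'I_n -> R) (y : R) : R :=
  threshold_payoff (Phi1 theta r y) [seq p i | i <- enum 'I_n].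

Definition Equal (a b : R) : R := Num.min (a / b) (b / a).

(* maximum of the prices (n >= 1 and prices >= 1 in the statement, so the
   neutral element 1 does not affect the value) *)
Definition pmax (n : nat) (p : 'I_n -> R) : R := \big[Num.max/1]_(i < n) p i.

End OneMax.

From HB Require Import structures.
From mathcomp Require Import all_boot all_order all_algebra.
From mathcomp Require Import all_classical all_reals all_analysis.
From mathcomp Require Import ring lra measurable_realfun.
Set Implicit Arguments.
Unset Strict Implicit.
Unset Printing Implicit Defensive.
Import Order.TTheory GRing.Theory Num.Theory.
Local Open Scope ring_scope.

(* Both bounds hold pointwise, for every realization, and survive taking
   expectations.  Write a = r theta and Phi = Phi^1_r(y), which lies in
   [a, 1/r].  If some price is accepted the payoff is at least Phi >= a >= r P*;
   otherwise P* < Phi <= 1/r, so r P* < 1 = payoff.  For the second bound, an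
   accepted price gives P* E^s <= P* E <= y <= a phi_r(y) <= a Phi.  If nothing
   is accepted and P* > a, then phi_r(y) > a forces a < y and P* < phi_r(y) <= y;
   since phi_r(y)/y is affine in u = a/y in [r, 1], it lies below the concave
   u^(1/(s+1)) as soon as 1/a <= r^(1/(s+1)), which is exactly what the choice
   of s guarantees; raising P*/y <= (a/y)^(1/(s+1)) to the power s+1 gives
   P* (P*/y)^s <= a. *)

Section powR_facts.
Variable R : realType.

Lemma powR_le_affine (u e : R) : 0 <= u -> 0 < e < 1 -> u `^ e <= e * u + (1 - e).
Proof.
(* Young's inequality with the conjugate exponents 1/e and 1/(1 - e). *)
move=> u0 /andP[e0 e1].
have e1' : 0 < 1 - e by rewrite subr_gt0.
have := @conjugate_powR R (u `^ e) 1 e^-1 (1 - e)^-1 (powR_ge0 _ _) ler01.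
rewrite !invr_gt0 e0 e1' !invrK mulr1 -powRrM mulfV ?gt_eqF // powRr1 // powR1.
by rewrite mulrC mul1r; apply; rewrite // addrC subrK.
Qed.

Lemma concave_powR_chord (a b x e : R) : 0 < a <= x -> x <= b -> 0 < e < 1 ->
  (b - x) * a `^ e + (x - a) * b `^ e <= (b - a) * x `^ e.
Proof.
move=> /andP[a0 ax] xb e01; have x0 : 0 < x by apply: lt_le_trans ax.
(* the tangent of the concave [x ^ e] at [x] bounds both endpoints *)
have tangent c : 0 <= c -> c `^ e <= x `^ e * (e * (c / x) + (1 - e)).
  move=> c0; have {1}-> : c = x * (c / x) by rewrite mulrCA divff ?gt_eqF ?mulr1.
  have cx0 : 0 <= c / x by rewrite divr_ge0 // ltW.
  by rewrite powRM ?(ltW x0) // ler_wpM2l ?powR_ge0 ?powR_le_affine.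
have -> : (b - a) * x `^ e = (b - x) * (x `^ e * (e * (a / x) + (1 - e)))
                             + (x - a) * (x `^ e * (e * (b / x) + (1 - e))).
  by field; rewrite gt_eqF.
have b0 : 0 < b by apply: lt_le_trans xb.
apply: lerD; apply: ler_wpM2l; rewrite ?subr_ge0 //; exact/tangent/ltW.
Qed.

Lemma mulr_le1_of_le_powRNhalf (x r : R) : 0 < x -> 0 <= r -> r <= x `^ (- 2^-1) ->
  r * (r * x) <= 1.
Proof.
have half : - 2^-1 + - 2^-1 = -1 :> R by field.
move=> x0 r0 rx; have := ler_pM r0 r0 rx rx.
rewrite -powRD; last by apply/implyP => _; rewrite gt_eqF.
rewrite half powR_inv1 ?(ltW x0) // => rr.
by rewrite mulrA -(mulVf (lt0r_neq0 x0)) ler_pM2r.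
Qed.

Lemma inv_le_powR_of_ln_div (theta r s : R) : 0 < r -> 1 < r * theta -> 0 <= s ->
  ln theta / ln (r * theta) - 2 <= s -> (r * theta)^-1 <= r `^ (s + 1)^-1.
Proof.
move=> r0 a1 s0 hs; have a0 := lt_trans ltr01 a1.
have t0 : 0 < theta by rewrite -(pmulr_rgt0 _ r0).
have La0 : 0 < ln (r * theta) by rewrite ln_gt0.
have lnr : ln r = ln (r * theta) - ln theta by rewrite lnM ?posrE // addrK.
rewrite /powR gt_eqF // -[(r * theta)^-1]lnK ?posrE ?invr_gt0 // lnV ?posrE //.
have s10 : 0 < s + 1 by rewrite ltr_wpDl.
rewrite ler_expR lnr -(ler_pM2l s10) mulrA mulfV ?gt_eqF // mul1r.
move: hs; rewrite lerBlDr ler_pdivrMr //; nra.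
Qed.

End powR_facts.

Section Equal_threshold_payoff.
Variable R : realType.
Implicit Types (a b thr : R) (ps : seq R).

Lemma Equal_gt0 a b : 0 < a -> 0 < b -> 0 < Equal a b.
Proof. by move=> a0 b0; rewrite lt_min !divr_gt0. Qed.

Lemma Equal_le1 a b : 0 < a -> 0 < b -> Equal a b <= 1.
Proof.
by move=> a0 b0; rewrite ge_min !ler_pdivrMr // !mul1r le_total.
Qed.

Lemma Equal_le_div a b : Equal a b <= b / a.
Proof. by rewrite ge_min lexx orbT. Qed.

Lemma Equal_div a b : 0 < a <= b -> Equal a b = a / b.
Proof.
case/andP=> a0 ab; have b0 := lt_le_trans a0 ab.
by apply: min_l; rewrite (@le_trans _ _ 1) // ?ler_pdivrMr ?ler_pdivlMr ?mul1r.
Qed.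

Lemma threshold_payoffP thr ps :
  (threshold_payoff thr ps = 1 /\ {in ps, forall x, x < thr}) \/
  (thr <= threshold_payoff thr ps /\ threshold_payoff thr ps \in ps).
Proof.
rewrite /threshold_payoff; elim: ps => [|x ps IH] /=; first by left.
case: ifPn => [thrx|]; first by right; rewrite thrx mem_head.
rewrite -ltNge => xthr; case: IH => [[-> ps_lt]|[thr_le in_ps]].
  by left; split=> // z; rewrite inE => /predU1P[->|/ps_lt].
by right; rewrite thr_le inE in_ps orbT.
Qed.

Lemma threshold_payoff_le thr ps M : 1 <= M -> {in ps, forall x, x <= M} ->
  threshold_payoff thr ps <= M.
Proof. by move=> M1 psM; case: (threshold_payoffP thr ps) => [[->]|[_ /psM]]. Qed.

Lemma A1_le theta r n (p : 'I_n -> R) y : 1 <= theta -> (forall i, p i <= theta) ->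
  A1 theta r p y <= theta.
Proof. by move=> t1 pt; apply: threshold_payoff_le => // _ /mapP[i _ ->]. Qed.

Lemma pmax_mem n (p : 'I_n -> R) : (0 < n)%N -> (forall i, 1 <= p i) ->
  pmax p \in [seq p i | i <- enum 'I_n].
Proof.
move=> n0 p1; rewrite /pmax.
have [i _ ->] := eq_bigmax (Ordinal n0) xpredT p isT (fun i _ => p1 i).
by rewrite map_f ?mem_enum.
Qed.

End Equal_threshold_payoff.

Section threshold_rule.
Variables (R : realType) (theta r : R).
Hypotheses (r_gt0 : 0 < r) (r_lt1 : r < 1).
Hypotheses (a_ge1 : 1 <= r * theta) (ra_le1 : r * (r * theta) <= 1).
Local Notation a := (r * theta).

Let a_gt0 : 0 < a. Proof. exact: lt_le_trans ltr01 a_ge1. Qed.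
Let r1_gt0 : 0 < 1 - r. Proof. by rewrite subr_gt0. Qed.
Let theta_gt0 : 0 < theta. Proof. by rewrite -(pmulr_rgt0 _ r_gt0). Qed.
Let theta_ge1 : 1 <= theta. Proof. by rewrite (le_trans a_ge1) // ger_pMl // ltW. Qed.
Let slope_ge0 : 0 <= (1 - r * a) / (a * (1 - r)).
Proof. by rewrite divr_ge0 ?subr_ge0 // mulr_ge0 // ltW. Qed.

(* [phi_r theta r] is the affine map sending a to a and theta to 1/r. *)
Lemma phi_r_sub y : phi_r theta r y - a = (1 - r * a) / (a * (1 - r)) * (y - a).
Proof. by rewrite /phi_r; field; rewrite !gt_eqF. Qed.

Lemma lt_phi_r y : a < phi_r theta r y -> a < y.
Proof.
rewrite -subr_gt0 phi_r_sub; apply: contraTT; rewrite -!leNgt -subr_le0 => ya.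
exact: mulr_ge0_le0.
Qed.

Lemma phi_r_le y : a <= y -> phi_r theta r y <= y.
Proof.
move=> ay; rewrite -subr_ge0.
have -> : y - phi_r theta r y = (a - 1) / (a * (1 - r)) * (y - a).
  by rewrite /phi_r; field; rewrite !gt_eqF.
by rewrite mulr_ge0 ?divr_ge0 ?subr_ge0 // mulr_ge0 // ltW.
Qed.

Lemma phi_r_le_inv y : y <= theta -> phi_r theta r y <= r^-1.
Proof.
move=> yt; rewrite -subr_ge0.
have -> : r^-1 - phi_r theta r y = (1 - r * a) / (a * (1 - r)) * (theta - y).
  by rewrite /phi_r; field; rewrite !gt_eqF.
by rewrite mulr_ge0 ?subr_ge0.
Qed.

Lemma le_mul_phi_r y : y <= theta -> y <= a * phi_r theta r y.
Proof.
move=> yt; rewrite -subr_ge0.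
have -> : a * phi_r theta r y - y = r * (a - 1) / (1 - r) * (theta - y).
  by rewrite /phi_r; field; rewrite !gt_eqF.
by rewrite mulr_ge0 ?divr_ge0 ?mulr_ge0 ?subr_ge0 // ?ltW.
Qed.

Lemma Phi1_le_inv y : y <= theta -> Phi1 theta r y <= r^-1.
Proof.
move=> yt; rewrite ge_max phi_r_le_inv // andbT.
by rewrite -(ler_pM2l r_gt0) mulfV ?gt_eqF.
Qed.

Lemma phi_r_div_le_powR s y : 0 < s -> a^-1 <= r `^ (s + 1)^-1 ->
  a <= y <= theta -> phi_r theta r y / y <= (a / y) `^ (s + 1)^-1.
Proof.
move=> s0 ar /andP[ay yt]; have y0 : 0 < y by apply: lt_le_trans ay.
set e := (s + 1)^-1; set u := a / y.
have e01 : 0 < e < 1 by rewrite invr_gt0 invf_lt1 ?ltrDr ?addr_gt0 //=; lra.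
have ru : r <= u by rewrite ler_pdivlMr // ler_pM2l.
have u1 : u <= 1 by rewrite ler_pdivrMr // mul1r.
have := concave_powR_chord (introT andP (conj r_gt0 ru)) u1 e01.
rewrite powR1 /= mulr1 => chord; rewrite -(ler_pM2l r1_gt0); apply: le_trans chord.
have -> : (1 - r) * (phi_r theta r y / y) = (1 - u) * a^-1 + (u - r).
  by rewrite /u /phi_r; field; rewrite !gt_eqF.
by rewrite lerD2r ler_wpM2l // subr_ge0.
Qed.

Lemma mul_powR_le_of_le_phi_r s y p : 0 < s -> a^-1 <= r `^ (s + 1)^-1 ->
  a <= y <= theta -> 0 < p <= phi_r theta r y -> p * (p / y) `^ s <= a.
Proof.
move=> s0 ar /andP[ay yt] /andP[p0 pphi]; have y0 : 0 < y by apply: lt_le_trans ay.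
have py : p / y <= (a / y) `^ (s + 1)^-1.
  apply: le_trans (phi_r_div_le_powR s0 ar _); last by rewrite ay.
  by rewrite ler_pM2r ?invr_gt0.
have s1 : 0 < s + 1 by rewrite addr_gt0.
have pys : (p / y) `^ (s + 1) <= a / y.
  have ay0 : 0 <= a / y by rewrite divr_ge0 // ltW.
  have -> : a / y = ((a / y) `^ (s + 1)^-1) `^ (s + 1).
    by rewrite -powRrM mulVf ?lt0r_neq0 // powRr1.
  by rewrite ge0_ler_powR // ?ltW // nnegrE ?powR_ge0 // divr_ge0 // ltW.
have -> : p * (p / y) `^ s = y * (p / y) `^ (s + 1).
  rewrite -[in RHS]mulr_powRB1 ?divr_ge0 ?ltW // addrK mulrA.
  by rewrite mulrCA divff ?gt_eqF ?mulr1.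
by apply: le_trans (ler_wpM2l (ltW y0) pys) _; rewrite mulrCA divff ?gt_eqF ?mulr1.
Qed.

Lemma r_mul_le_threshold_payoff thr pm ps : pm \in ps -> pm <= theta ->
  a <= thr <= r^-1 -> r * pm <= threshold_payoff thr ps.
Proof.
move=> pm_in pm_le /andP[a_thr thr_r].
case: (threshold_payoffP thr ps) => [[-> lt_thr]|[thr_le _]].
  rewrite -(mulfV (lt0r_neq0 r_gt0)) ler_pM2l // ltW //.
  exact: lt_le_trans (lt_thr _ pm_in) thr_r.
by rewrite (le_trans _ thr_le) // (le_trans _ a_thr) // ler_pM2l.
Qed.

Lemma r_mul_pmax_le_A1 n (p : 'I_n -> R) y : (0 < n)%N ->
  (forall i, 1 <= p i <= theta) -> y <= theta -> r * pmax p <= A1 theta r p y.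
Proof.
move=> n0 pb yt; have p1 i : 1 <= p i by case/andP: (pb i).
apply: r_mul_le_threshold_payoff; first exact: pmax_mem.
  by apply: bigmax_le => // i _; case/andP: (pb i).
by rewrite le_max lexx Phi1_le_inv.
Qed.

Lemma mul_Equal_le_mul_Phi1 y pm : 1 <= y <= theta -> 0 < pm ->
  pm * Equal pm y <= a * Phi1 theta r y.
Proof.
move=> /andP[_ y_le] pm0.
have pmE : pm * Equal pm y <= y.
  rewrite (le_trans (ler_wpM2l (ltW pm0) (Equal_le_div _ _))) //.
  by rewrite mulrCA divff ?gt_eqF ?mulr1.
rewrite (le_trans pmE) // (le_trans (le_mul_phi_r y_le)) //.
by rewrite ler_wpM2l ?le_max ?lexx ?orbT // ltW.
Qed.

Variable s : R.
Hypotheses (s_ge1 : 1 <= s) (a_inv_le : a^-1 <= r `^ (s + 1)^-1).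

Lemma mul_Equal_powR_le_of_lt_Phi1 y pm : 1 <= y <= theta -> 0 < pm ->
  pm < Phi1 theta r y -> pm * Equal pm y `^ s <= a.
Proof.
move=> /andP[y_ge1 y_le] pm0; have y0 := lt_le_trans ltr01 y_ge1.
have [pm_a _|a_pm] := leP pm a.
  have Es1 : Equal pm y `^ s <= 1.
    rewrite (le_trans _ (Equal_le1 pm0 y0)) //.
    by rewrite ge1r_powR // Equal_gt0 // Equal_le1.
  by rewrite (le_trans _ pm_a) // ger_pMr.
rewrite lt_max ltNge (ltW a_pm) /= => pm_phi.
have a_y : a < y by apply: lt_phi_r; exact: lt_trans pm_phi.
have pm_y : pm <= y by rewrite (le_trans (ltW pm_phi)) // phi_r_le // ltW.
rewrite Equal_div ?pm0 //; apply: mul_powR_le_of_le_phi_r.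
- exact: lt_le_trans ltr01 s_ge1.
- exact: a_inv_le.
- by rewrite (ltW a_y).
- by rewrite pm0 ltW.
Qed.

Lemma mul_Equal_powR_le_threshold_payoff y pm ps : 1 <= y <= theta -> 0 < pm ->
  pm \in ps -> pm * Equal pm y `^ s <= a * threshold_payoff (Phi1 theta r y) ps.
Proof.
move=> yb pm0 pm_in; have y0 : 0 < y by case/andP: yb => /(lt_le_trans ltr01).
case: (threshold_payoffP (Phi1 theta r y) ps) => [[-> lt_Phi]|[Phi_le _]].
  by rewrite mulr1 mul_Equal_powR_le_of_lt_Phi1 ?lt_Phi.
have Es : Equal pm y `^ s <= Equal pm y.
  by rewrite ge1r_powR // Equal_gt0 // Equal_le1.
rewrite (le_trans (ler_wpM2l (ltW pm0) Es)) //.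
by rewrite (le_trans (mul_Equal_le_mul_Phi1 yb pm0)) // ler_wpM2l // ltW.
Qed.

Lemma pmax_Equal_le_A1 n (p : 'I_n -> R) y : (0 < n)%N ->
  (forall i, 1 <= p i) -> 1 <= y <= theta ->
  pmax p * Equal (pmax p) y `^ s <= a * A1 theta r p y.
Proof.
move=> n0 p1 yb.
apply: mul_Equal_powR_le_threshold_payoff => //; last exact: pmax_mem.
exact: lt_le_trans ltr01 (bigmax_ge_id _ _ _ _).
Qed.

End threshold_rule.

Section bounded_expectation.
Context d (T : measurableType d) (R : realType) (Pr : probability T R).
Implicit Types (f g : T -> R) (c k M : R).

Lemma expectation_bounded_fin_num f M : measurable_fun setT f ->
  (forall w, 0 <= f w) -> (forall w, f w <= M) -> ('E_Pr[f])%E \is a fin_num.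
Proof.
move=> mf f0 fM; rewrite ge0_fin_numE ?expectation_ge0 //.
apply: (@le_lt_trans _ _ M%:E); last exact: ltey.
rewrite -(expectation_cst Pr M); apply: expectation_le => // [w|].
- exact: le_trans (fM w).
- exact: aeW.
Qed.

Lemma fine_expectation_le f g M :
  measurable_fun setT f -> measurable_fun setT g ->
  (forall w, 0 <= f w) -> (forall w, f w <= g w) -> (forall w, g w <= M) ->
  fine ('E_Pr[f])%E <= fine ('E_Pr[g])%E.
Proof.
move=> mf mg f0 fg gM; have g0 w := le_trans (f0 w) (fg w).
have fM w := le_trans (fg w) (gM w).
apply: fine_le.
- exact: expectation_bounded_fin_num mf f0 fM.
- exact: expectation_bounded_fin_num mg g0 gM.
- by apply: expectation_le => //; apply: aeW.
Qed.

Lemma fine_expectationZl f k M : measurable_fun setT f ->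
  (forall w, 0 <= f w) -> (forall w, f w <= M) -> 0 <= k ->
  fine ('E_Pr[fun w => (k * f w)%R])%E = k * fine ('E_Pr[f])%E.
Proof.
move=> mf f0 fM k0; have := expectation_bounded_fin_num mf f0 fM.
rewrite unlock => Efin; under eq_integral do rewrite EFinM.
rewrite ge0_integralZl_EFin //= ?fineM // => [w _|]; first by rewrite lee_fin.
exact/measurable_EFinP.
Qed.

Lemma expectation_ratio_ge (X A G : T -> R) c k M :
  measurable_fun setT X -> measurable_fun setT A -> measurable_fun setT G ->
  0 < c -> 0 < k -> (forall w, 1 <= X w) -> (forall w, c * X w <= A w) ->
  (forall w, A w <= M) -> (forall w, 0 <= G w <= k * A w) ->
  Num.max c (k^-1 * (fine ('E_Pr[G])%E / fine ('E_Pr[X])%E)) <=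
  fine ('E_Pr[A])%E / fine ('E_Pr[X])%E.
Proof.
move=> mX mA mG c0 k0 X1 XA AM Gb.
have X0 w : 0 <= X w := le_trans ler01 (X1 w).
have XM w : X w <= c^-1 * M.
  by rewrite ler_pdivlMl // (le_trans (XA w)).
have A0 w : 0 <= A w by rewrite (le_trans _ (XA w)) // mulr_ge0 // ltW.
have EX1 : 1 <= fine ('E_Pr[X])%E.
  have := @fine_expectation_le (cst 1) X _ (measurable_cst _) mX (fun=> ler01) X1 XM.
  by rewrite expectation_cst.
have EA : c * fine ('E_Pr[X])%E <= fine ('E_Pr[A])%E.
  rewrite -(fine_expectationZl mX X0 XM (ltW c0)).
  apply: (fine_expectation_le _ mA _ XA AM) => [|w]; last by rewrite mulr_ge0 // ltW.
  by apply: measurable_funM => //; exact: measurable_cst.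
have EG : fine ('E_Pr[G])%E <= k * fine ('E_Pr[A])%E.
  rewrite -(fine_expectationZl mA A0 AM (ltW k0)).
  apply: (@fine_expectation_le _ _ (k * M) mG) => [|w|w|w]; first 1 last.
  - by case/andP: (Gb w).
  - by case/andP: (Gb w).
  - by rewrite ler_wpM2l // ltW.
  by apply: measurable_funM => //; exact: measurable_cst.
have EX0 : 0 < fine ('E_Pr[X])%E := lt_le_trans ltr01 EX1.
rewrite ge_max ler_pdivlMr // EA /= mulrA ler_pM2r ?invr_gt0 //.
by rewrite ler_pdivrMl.
Qed.

End bounded_expectation.

Section measurability.
Context d (T : measurableType d) (R : realType).

Lemma measurable_bigmax (I : Type) (s : seq I) (F : I -> T -> R) (x : R) :
  (forall i, measurable_fun setT (F i)) ->
  measurable_fun setT (fun w => \big[Num.max/x]_(i <- s) F i w).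
Proof.
move=> mF; elim: s => [|i s IH].
  by under eq_fun do rewrite big_nil; exact: measurable_cst.
by under eq_fun do rewrite big_cons; exact: measurable_maxr.
Qed.

Lemma measurable_threshold_payoff (I : Type) (s : seq I) (F : I -> T -> R)
    (thr : T -> R) :
  (forall i, measurable_fun setT (F i)) -> measurable_fun setT thr ->
  measurable_fun setT (fun w => threshold_payoff (thr w) [seq F i w | i <- s]).
Proof.
move=> mF mthr; elim: s => [|i s IH]; first exact: measurable_cst.
by apply: measurable_fun_ifT => //; exact: measurable_fun_ler.
Qed.

Lemma measurable_Phi1 (theta r : R) (Y : T -> R) : measurable_fun setT Y ->
  measurable_fun setT (fun w => Phi1 theta r (Y w)).
Proof.
move=> mY; apply: measurable_maxr; first exact: measurable_cst.
apply: measurable_funD; first exact: measurable_cst.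
apply: measurable_funM; first exact: measurable_cst.
by apply: measurable_funM => //; exact: measurable_cst.
Qed.

Lemma measurable_Equal (X Y : T -> R) :
  measurable_fun setT X -> measurable_fun setT Y ->
  (forall w, 0 <= X w) -> (forall w, 0 <= Y w) ->
  measurable_fun setT (fun w => Equal (X w) (Y w)).
Proof.
move=> mX mY X0 Y0.
have mV (Z : T -> R) : measurable_fun setT Z -> (forall w, 0 <= Z w) ->
    measurable_fun setT (fun w => (Z w)^-1).
  move=> mZ Z0; under eq_fun do rewrite -powR_inv1 //.
  exact: measurableT_comp (measurable_powR _) mZ.
by apply: measurable_minr; apply: measurable_funM => //; exact: mV.
Qed.

End measurability.

Theorem lemma1 (R : realType) (d : measure_display) (T : measurableType d)
  (Pr : probability T R) (theta r : R) (n : nat)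
  (P : 'I_n -> T -> R) (Y : T -> R) :
  1 < theta ->
  theta^-1 < r -> r <= theta `^ (- 2^-1) ->
  (0 < n)%N ->
  (forall i, measurable_fun setT (P i)) ->
  measurable_fun setT Y ->
  (forall i w, 1 <= P i w <= theta) ->
  (forall w, 1 <= Y w <= theta) ->
  let s := Num.max 1 (ln theta / ln (r * theta) - 2) in
  let Pstar := fun w => pmax (fun i => P i w) in
  let EPstar := fine ('E_Pr[Pstar])%E in
  fine ('E_Pr[fun w => (A1 theta r (fun i => P i w) (Y w))%R])%E / EPstar >=
  Num.max r ((r * theta)^-1 *
     (fine ('E_Pr[fun w => (Pstar w * (Equal (Pstar w) (Y w)) `^ s)%R])%E / EPstar)).
Proof.
move=> t1 rt r_le n0 mP mY Pb Yb; cbv zeta.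
set s := Num.max 1 _; set Pstar := fun w => pmax _.
have t0 : 0 < theta := lt_trans ltr01 t1.
have r0 : 0 < r by apply: lt_trans rt; rewrite invr_gt0.
have a1 : 1 < r * theta by rewrite -ltr_pdivrMr // div1r.
have ra : r * (r * theta) <= 1 by apply: mulr_le1_of_le_powRNhalf => //; exact: ltW.
have r1 : r < 1 by rewrite (lt_le_trans _ ra) // ltr_pMr.
have s1 : 1 <= s by rewrite le_max lexx.
have sr : (r * theta)^-1 <= r `^ (s + 1)^-1.
  apply: inv_le_powR_of_ln_div => //; first exact: le_trans s1.
  by rewrite le_max lexx orbT.
have P1 i w : 1 <= P i w by case/andP: (Pb i w).
have Y0 w : 0 <= Y w by case/andP: (Yb w) => /(le_trans ler01).
have Pstar1 w : 1 <= Pstar w by exact: bigmax_ge_id.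
have mPstar : measurable_fun setT Pstar by exact: measurable_bigmax.
apply: (@expectation_ratio_ge _ _ _ _ _ _ _ _ _ theta) => // [|||w|w|w].
- by apply: measurable_threshold_payoff => //; exact: measurable_Phi1.
- apply: measurable_funM => //; apply: measurableT_comp (measurable_powR _) _.
  by apply: measurable_Equal => // w; exact: le_trans ler01 (Pstar1 w).
- exact: mulr_gt0.
- by apply: r_mul_pmax_le_A1 => //; [exact: ltW | case/andP: (Yb w)].
- by apply: A1_le => // [|i]; [exact: ltW | case/andP: (Pb i w)].
- rewrite mulr_ge0 ?powR_ge0 ?(le_trans ler01 (Pstar1 w)) //=.
  by apply: pmax_Equal_le_A1 => //; exact: ltW.
Qed.
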